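(* Let $S$ be a real closed field and let $\mathfrak D$ be a non-empty convex subset of $S$ which is bounded above and has no least upper bound in $S$. Say that $x\in S$ satisfies ''$x<d$'' if $x$ is not an upper bound of $\mathfrak D$, and ''$x>d$'' if $x$ is an upper bound of $\mathfrak D$. Let $I$ be a definable interval of $S_{\geq 0}$ which contains $]\lambda,+\infty[\cap\mathfrak D$ for some $\lambda\in\mathfrak D$, and let $f\colon I\to S$ be a definable function. Assume that there exists $a\in I$ with $a<d$ such that $f(x)>d$ for every $x\in I$ with $a<x<d$. Then there exists $x\in I$ with $x>d$ and $f(x)>d$.
   Context: ''Definable'' means definable with parameters in the theory of real closed fields (equivalently, semi-algebraic). *)

From HB Require Import structures.
From mathcomp Require Import all_boot all_order all_algebra.
From mathcomp Require Import ordered_qelim.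
Set Implicit Arguments. Unset Strict Implicit. Unset Printing Implicit Defensive.
Import Order.TTheory GRing.Theory Num.Theory.
Local Open Scope ring_scope.

(* Definability with parameters in the language of ordered rings:
   a first-order formula of ord.formula S (constants from S allowed as
   parameters via Const), interpreted by ord.holds. *)

Definition definable_set (S : rcfType) (A : S -> Prop) : Prop :=
  exists phi : ord.formula S, forall x : S, A x <-> ord.holds [:: x] phi.

(* A function f : I -> S (I a subset of S, f represented as S -> S whose
   values outside I are irrelevant) is definable if its graph
   {(x, f x) | x in I} is a definable subset of S^2. *)
Definition definable_fun (S : rcfType) (I : S -> Prop) (f : S -> S) : Prop :=
  exists phi : ord.formula S, forall x y : S,
    (I x /\ y = f x) <-> ord.holds [:: x; y] phi.

Definition convex_set (S : rcfType) (D : S -> Prop) : Prop :=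
  forall x y z : S, D x -> D z -> x <= y -> y <= z -> D y.

Definition upper_bound (S : rcfType) (D : S -> Prop) (b : S) : Prop :=
  forall x : S, D x -> x <= b.

Definition bounded_above (S : rcfType) (D : S -> Prop) : Prop :=
  exists b : S, upper_bound D b.

Definition has_sup (S : rcfType) (D : S -> Prop) : Prop :=
  exists b : S, upper_bound D b /\ forall c : S, upper_bound D c -> b <= c.

Definition lt_cut (S : rcfType) (D : S -> Prop) (x : S) : Prop := ~ upper_bound D x.
Definition gt_cut (S : rcfType) (D : S -> Prop) (x : S) : Prop := upper_bound D x.

From HB Require Import structures.
From mathcomp Require Import all_boot all_order all_algebra.
From mathcomp Require Import ordered_qelim polyrcf.
From mathcomp Require qe_rcf.
From Stdlib Require Import Classical.
Set Implicit Arguments.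
Unset Strict Implicit.
Unset Printing Implicit Defensive.
Import Order.TTheory GRing.Theory Num.Theory.
Local Open Scope ring_scope.

(* A weak o-minimality at the cut d: by quantifier elimination a definable
   subset of S is a boolean combination of sign conditions on polynomials, and
   each root of a nonzero polynomial lies strictly on one side of d, so a
   definable set either contains or misses a whole interval ]b, c[ with
   b < d < c.  The set X = {x in I | x <= f x} contains the points of D close
   to d, hence some z > d, and then f z >= z > d. *)

Lemma rterm_horner (S : rcfType) (t : GRing.term S) : GRing.rterm t ->
  exists p : {poly S}, forall x, GRing.eval [:: x] t = p.[x].
Proof.
(* [abstrX 0 t] is the coefficient list of [t] as a polynomial in ['X_0]. *)
move=> rt; exists (qe_rcf.eval_poly [::] (qe_rcf.abstrX 0 (qe_rcf.to_rterm t))).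
by move=> x; rewrite qe_rcf.abstrXP qe_rcf.evalE qe_rcf.to_rtermE.
Qed.

Lemma definable_set_le_fun (S : rcfType) (I : S -> Prop) (f : S -> S) :
  definable_fun I f -> definable_set (fun x => I x /\ x <= f x).
Proof.
move=> [psi psiP].
exists (ord.Exists 1 (ord.And psi (ord.Le (GRing.Var _ 0) (GRing.Var _ 1)))).
move=> x /=; split => [[Ix le_xf] | [y [/psiP[Ix ->] le_xf]]] //.
by exists (f x); split => //; apply/psiP.
Qed.

Section Cut.
Variables (S : rcfType) (D : S -> Prop).
Hypotheses (D_nonempty : exists x, D x) (D_bounded : bounded_above D).
Hypothesis D_nosup : ~ has_sup D.

Lemma lt_cut_mem x : D x -> lt_cut D x.
Proof. by move=> Dx ub_x; apply: D_nosup; exists x; split => // c; apply. Qed.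

Lemma lt_cut_exists_mem b : lt_cut D b -> exists2 y, D y & b < y.
Proof.
move=> nub_b; apply: NNPP => no_y; apply: nub_b => x Dx.
by rewrite leNgt; apply/negP => lt_bx; apply: no_y; exists x.
Qed.

Lemma gt_cut_not_least c : gt_cut D c -> exists2 c', gt_cut D c' & c' < c.
Proof.
move=> ub_c; apply: NNPP => least; apply: D_nosup.
exists c; split => // c' ub_c'.
by rewrite leNgt; apply/negP => lt_c'c; apply: least; exists c'.
Qed.

Lemma lt_cut_gt_cut_lt b c : lt_cut D b -> gt_cut D c -> b < c.
Proof.
move=> nub_b ub_c; rewrite ltNge; apply/negP => le_cb; apply: nub_b => x Dx.
exact: le_trans (ub_c x Dx) le_cb.
Qed.

Lemma gt_cut_le c c' : gt_cut D c -> c <= c' -> gt_cut D c'.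
Proof. by move=> ub_c le_cc' x /ub_c/le_trans; apply. Qed.

Definition near_cut (P : S -> Prop) := exists b c,
  [/\ lt_cut D b, gt_cut D c & forall x, b < x < c -> P x].

Lemma near_cutW (P Q : S -> Prop) :
  (forall x, P x -> Q x) -> near_cut P -> near_cut Q.
Proof.
by move=> PQ [b [c [nub_b ub_c Pbc]]]; exists b, c; split=> // x /Pbc/PQ.
Qed.

Lemma near_cutI (P Q : S -> Prop) :
  near_cut P -> near_cut Q -> near_cut (fun x => P x /\ Q x).
Proof.
move=> [b1 [c1 [nub1 ub1 P1]]] [b2 [c2 [nub2 ub2 P2]]].
exists (Order.max b1 b2), (Order.min c1 c2); split.
- by case: leP.
- by case: leP.
move=> x; rewrite gt_max lt_min => /andP[/andP[b1x b2x] /andP[xc1 xc2]].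
by split; [apply: P1 | apply: P2]; apply/andP.
Qed.

Lemma near_cut_gt b : lt_cut D b -> near_cut (fun x => b < x).
Proof. by have [c ub_c] := D_bounded; exists b, c; split=> // x /andP[]. Qed.

Lemma near_cut_lt c : gt_cut D c -> near_cut (fun x => x < c).
Proof.
have [b Db] := D_nonempty.
by exists b, c; split=> //; [exact: lt_cut_mem | move=> x /andP[]].
Qed.

Lemma near_cutT : near_cut (fun _ => True).
Proof. by have [b /lt_cut_mem/near_cut_gt/near_cutW] := D_nonempty; apply. Qed.

Lemma near_cut_notin (s : seq S) : near_cut (fun x => x \notin s).
Proof.
elim: s => [|r s IHs]; first exact: near_cutW near_cutT.
have near_neq : near_cut (fun x => x != r).
  have [ub_r | nub_r] := classic (gt_cut D r).
    by apply: near_cutW (near_cut_lt ub_r) => x /lt_eqF ->.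
  by apply: near_cutW (near_cut_gt nub_r) => x /gt_eqF ->.
apply: near_cutW (near_cutI near_neq IHs) => x [x_neq_r x_notin_s].
by rewrite inE negb_or x_neq_r.
Qed.

Lemma near_cut_mem (P : S -> Prop) : near_cut P -> exists2 y, D y & P y.
Proof.
move=> [b [c [nub_b ub_c Pbc]]].
have [y Dy lt_by] := lt_cut_exists_mem nub_b.
exists y => //; apply: Pbc; rewrite lt_by /=.
exact: lt_cut_gt_cut_lt (lt_cut_mem Dy) ub_c.
Qed.

Lemma near_cut_gt_cut (P : S -> Prop) :
  near_cut P -> exists2 z, gt_cut D z & P z.
Proof.
move=> [b [c [nub_b ub_c Pbc]]]; have [z ub_z lt_zc] := gt_cut_not_least ub_c.
by exists z => //; apply: Pbc; rewrite lt_zc (lt_cut_gt_cut_lt nub_b ub_z).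
Qed.

Definition cut_decided (P : S -> bool) := exists v, near_cut (fun x => P x = v).

Lemma cut_decided2 (op : bool -> bool -> bool) (P Q : S -> bool) :
  cut_decided P -> cut_decided Q -> cut_decided (fun x => op (P x) (Q x)).
Proof.
move=> [u nearP] [v nearQ]; exists (op u v).
by apply: near_cutW (near_cutI nearP nearQ) => x [-> ->].
Qed.

Lemma cut_decided_sgr (p : {poly S}) (G : S -> bool) :
  cut_decided (fun x => G (Num.sg p.[x])).
Proof.
have [->|p_neq0] := eqVneq p 0.
  by exists (G 0); apply: near_cutW near_cutT => x _; rewrite horner0 sgr0.
have [b [c [nub_b ub_c notin_roots]]] := near_cut_notin (rootsR p).
have p_noroot : {in `]b, c[, forall x, ~~ root p x}.
  move=> x; rewrite in_itv /= => /notin_roots; apply: contra => root_px.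
  by rewrite -(roots_on_rootsR p_neq0) in_itv root_px.
have mid_bc := mid_in_itvoo (lt_cut_gt_cut_lt nub_b ub_c).
exists (G (Num.sg p.[(b + c) / 2])), b, c; split=> // x x_bc.
by rewrite (polyrN0_itv p_noroot mid_bc) // in_itv.
Qed.

Lemma cut_decided_cmp (cmp : rel S) (t1 t2 : GRing.term S) :
  (forall u v, cmp u v = cmp (Num.sg (u - v)) 0) ->
  GRing.rterm t1 -> GRing.rterm t2 ->
  cut_decided (fun x => cmp (GRing.eval [:: x] t1) (GRing.eval [:: x] t2)).
Proof.
move=> cmp_sgr /rterm_horner[p1 p1E] /rterm_horner[p2 p2E].
have [v near_v] := cut_decided_sgr (p1 - p2) (cmp^~ 0); exists v.
by apply: near_cutW near_v => x <-; rewrite p1E p2E cmp_sgr hornerD hornerN.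
Qed.

Lemma cut_decided_qf_eval (g : ord.formula S) :
  ord.qf_form g -> ord.rformula g ->
  cut_decided (fun x => ord.qf_eval [:: x] g).
Proof.
elim: g => //=.
- by move=> b _ _; exists b; apply: near_cutW near_cutT.
- move=> t1 t2 _ /andP[rt1 rt2]; apply: cut_decided_cmp => // u v.
  by rewrite sgr_eq0 subr_eq0.
- move=> t1 t2 _ /andP[rt1 rt2]; apply: cut_decided_cmp => // u v.
  by rewrite sgr_lt0 subr_lt0.
- move=> t1 t2 _ /andP[rt1 rt2]; apply: cut_decided_cmp => // u v.
  by rewrite sgr_le0 subr_le0.
- by move=> g1 IH1 g2 IH2 /andP[q1 q2] /andP[r1 r2]; apply: cut_decided2; auto.
- by move=> g1 IH1 g2 IH2 /andP[q1 q2] /andP[r1 r2]; apply: cut_decided2; auto.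
- by move=> g1 IH1 g2 IH2 /andP[q1 q2] /andP[r1 r2]; apply: cut_decided2; auto.
by move=> g IH q r; apply: (@cut_decided2 (fun u _ => ~~ u)); auto.
Qed.

Lemma cut_decided_rcf_sat (phi : ord.formula S) :
  cut_decided (fun x => qe_rcf.rcf_sat [:: x] phi).
Proof.
(* [rcf_sat e phi] unfolds to the evaluation of the quantifier-free formula
   computed from [phi] by quantifier elimination. *)
have /andP[qf rf] :=
  ord.quantifier_elim_wf (@qe_rcf.wf_QE_wproj S) (ord.to_rform_rformula phi).
exact: cut_decided_qf_eval.
Qed.

Lemma definable_set_near_cut (A : S -> Prop) :
  definable_set A -> near_cut A \/ near_cut (fun x => ~ A x).
Proof.
move=> [phi phiP]; have [[] near_sat] := cut_decided_rcf_sat phi; [left|right].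
  by apply: near_cutW near_sat => x /qe_rcf.rcf_satP/phiP.
by apply: near_cutW near_sat => x /negbT/qe_rcf.rcf_satP unsat /phiP.
Qed.

End Cut.

Theorem lemma3p2 (S : rcfType) (D : S -> Prop) (i : interval S) (f : S -> S) :
  (exists x, D x) ->
  convex_set D ->
  bounded_above D ->
  ~ has_sup D ->
  (forall x, x \in i -> 0 <= x) ->
  (exists lam, D lam /\ forall x, D x -> lam < x -> x \in i) ->
  definable_fun (fun x => x \in i) f ->
  (exists a, a \in i /\ lt_cut D a /\
     forall x, x \in i -> a < x -> lt_cut D x -> gt_cut D (f x)) ->
  exists x, x \in i /\ gt_cut D x /\ gt_cut D (f x).
Proof.
move=> Dne _ Dbd Dns _ [lam [Dlam lam_i]] /definable_set_le_fun X_def.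
move=> [a [_ [nub_a f_gt_cut]]].
have [near_X | near_nX] := definable_set_near_cut Dne Dbd Dns X_def.
  have [z ub_z [z_i le_zf]] := near_cut_gt_cut Dns near_X.
  by exists z; split=> //; split=> //; apply: gt_cut_le ub_z le_zf.
have near_a := near_cut_gt Dbd nub_a.
have near_lam := near_cut_gt Dbd (lt_cut_mem Dns Dlam).
have [y Dy [lt_ay [lt_lamy nXy]]] :=
  near_cut_mem Dns (near_cutI near_a (near_cutI near_lam near_nX)).
have y_i := lam_i y Dy lt_lamy; have nub_y := lt_cut_mem Dns Dy.
have ub_fy := f_gt_cut y y_i lt_ay nub_y.
exfalso; apply: nXy; split=> //; rewrite leNgt; apply/negP => /ltW le_fy_y.
exact/nub_y/(gt_cut_le ub_fy).
Qed.
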